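(* Fix $n\ge0$. For every formula $\phi\in\mathcal{L}^1$ and every label $w$, the computation of $\mathtt{Prove_n}(w:\phi)$ terminates.
   Context: Single-agent setting: $Ag=\{1\}$. Formulas $\phi ::= p \mid \overline{p} \mid (\phi\wedge\phi) \mid (\phi\vee\phi) \mid \Box\phi \mid \Diamond\phi \mid [1]\phi \mid \langle 1\rangle\phi$; $\overline{\phi}$ swaps $p/\overline{p}$, $\wedge/\vee$, $\Box/\Diamond$, $[1]/\langle 1\rangle$. A labelled sequent $\mathcal{R},\Gamma$ consists of relational atoms $\mathcal{R}_1xy$ and labelled formulas $x:\phi$. Graphs. $G(\Lambda)$ has the labels of $\Lambda$ as vertices and an edge $(x,y)$ for each $\mathcal{R}_1xy\in\Lambda$. A tree is a graph with a root having exactly one directed path to every other node; a forest is a disjoint union of trees. $\Lambda$ is forestlike iff $G(\Lambda)$ is a forest; its trees are choice-trees; $CT(w)$ is the choice-tree containing $w$. For forestlike $\Lambda$ and label $w$: $w$ is saturated iff (i) $w:\phi\in\Lambda$ implies $w:\overline{\phi}\notin\Lambda$, (ii) $w:\phi\vee\psi\in\Lambda$ implies $w:\phi,w:\psi\in\Lambda$, (iii) $w:\phi\wedge\psi\in\Lambda$ implies $w:\phi\in\Lambda$ or $w:\psi\in\Lambda$. $w$ is $\Box$-realized iff for each $w:\Box\phi\in\Lambda$ some label $u$ has $u:\phi\in\Lambda$; $[1]$-realized iff for each $w:[1]\phi\in\Lambda$ some $u\in CT(w)$ has $u:\phi\in\Lambda$; $\Diamond$-propagated iff for each $w:\Diamond\phi\in\Lambda$,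 $u:\phi\in\Lambda$ for all labels $u$; $\langle1\rangle$-propagated iff for each $w:\langle1\rangle\phi\in\Lambda$, $u:\phi\in\Lambda$ for all $u\in CT(w)$. $\Lambda$ is $n$-choice consistent ($n>0$) iff $G(\Lambda)$ has at most $n$ choice-trees. $\Lambda$ is stable iff all labels are saturated, $\Box$- and $[1]$-realized, $\Diamond$- and $\langle1\rangle$-propagated, and (when $n>0$) $\Lambda$ is $n$-choice consistent. Algorithm $\mathtt{Prove_n}(\mathcal{R},\Gamma)$, steps tried in order: 1. If $w:p$ and $w:\overline{p}$ are both present, return true. 2. If the sequent is stable, return false. 3. If some $w$ is not saturated: (i) if $w:\phi\vee\psi$ is present but $w:\phi$ or $w:\psi$ absent, return $\mathtt{Prove_n}(\mathcal{R},w:\phi,w:\psi,\Gamma)$; (ii) if $w:\phi\wedge\psi$ is present but neither $w:\phi$ nor $w:\psi$, return false if $\mathtt{Prove_n}(\mathcal{R},w:\phi,\Gamma)$ or $\mathtt{Prove_n}(\mathcal{R},w:\psi,\Gamma)$ returns false, else true. 4. If some $w:\langle1\rangle\phi$ is present and some $u\in CT(w)$ has $u:\phi$ absent, return $\mathtt{Prove_n}(\mathcal{R},u:\phi,\Gamma)$. 5. If some $w:\Diamond\phi$ is present and some label $u$ has $u:\phi$ absent, return $\mathtt{Prove_n}(\mathcal{R},u:\phi,\Gamma)$. 6. If some $w:[1]\phi$ is present with $u:\phi$ absent for all $u\in CT(w)$, return $\mathtt{Prove_n}(\mathcal{R},\mathcal{R}_1wv,v:\phi,\Gamma)$, $v$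 fresh. 7. If some $w:\Box\phi$ is present with $u:\phi$ absent for all labels $u$, return $\mathtt{Prove_n}(\mathcal{R},v:\phi,\Gamma)$, $v$ fresh. 8. (Only when $n>0$.) If not $n$-choice consistent, pick distinct choice-tree roots $w_0,\dots,w_n$ and return false if $\mathtt{Prove_n}(\mathcal{R},\mathcal{R}_1w_kw_j,\Gamma)$ returns false for some $0\le k\le n-1$, $k+1\le j\le n$, else true. For $n=0$ step 8 is absent and stability omits $n$-choice consistency. *)

(* Formalization of the proof-search procedure Prove_n for the
   single-agent logic (Ag = {1}) as a (nondeterministic) call relation on
   labelled sequents; termination = well-foundedness (Acc) of the call
   relation from the initial sequent. *)
From Stdlib Require Import List Arith Relations.
Import ListNotations.

Inductive form : Type :=
  | Var   (p : nat)
  | NVar  (p : nat)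
  | And   (a b : form)
  | Or    (a b : form)
  | Box   (a : form)
  | Dia   (a : form)
  | Stit  (a : form)           (* [1] *)
  | CStit (a : form).          (* <1> *)

Fixpoint neg (f : form) : form :=
  match f with
  | Var p => NVar p
  | NVar p => Var p
  | And a b => Or (neg a) (neg b)
  | Or a b => And (neg a) (neg b)
  | Box a => Dia (neg a)
  | Dia a => Box (neg a)
  | Stit a => CStit (neg a)
  | CStit a => Stit (neg a)
  end.

(* A labelled sequent R,Gamma is a pair of the
   list of relational atoms R_1 x y (as pairs (x,y)) and the list of labelled
   formulas x:phi (as pairs (x,phi)); only membership matters. *)
Definition sequent : Type := (list (nat * nat) * list (nat * form))%type.

Definition present (S : sequent) (x : nat) (f : form) : Prop := In (x, f) (snd S).
Definition edge (S : sequent) (x y : nat) : Prop := In (x, y) (fst S).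

Definition label (S : sequent) (x : nat) : Prop :=
  (exists y, edge S x y \/ edge S y x) \/ (exists f, present S x f).

Definition reach (S : sequent) : nat -> nat -> Prop := clos_refl_trans nat (edge S).

Definition is_root (S : sequent) (r : nat) : Prop :=
  label S r /\ forall x, ~ edge S x r.

Definition inCT (S : sequent) (w u : nat) : Prop :=
  exists r, is_root S r /\ reach S r w /\ reach S r u.

Definition saturated (S : sequent) (w : nat) : Prop :=
  (forall f, present S w f -> ~ present S w (neg f)) /\
  (forall a b, present S w (Or a b) -> present S w a /\ present S w b) /\
  (forall a b, present S w (And a b) -> present S w a \/ present S w b).

Definition box_realized (S : sequent) (w : nat) : Prop :=
  forall f, present S w (Box f) -> exists u, label S u /\ present S u f.

Definition stit_realized (S : sequent) (w : nat) : Prop :=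
  forall f, present S w (Stit f) -> exists u, inCT S w u /\ present S u f.

Definition dia_propagated (S : sequent) (w : nat) : Prop :=
  forall f, present S w (Dia f) -> forall u, label S u -> present S u f.

Definition cstit_propagated (S : sequent) (w : nat) : Prop :=
  forall f, present S w (CStit f) -> forall u, inCT S w u -> present S u f.

(* n-choice consistency: G(S) has at most n choice-trees, i.e. there are no
   n+1 distinct choice-tree roots. *)
Definition choice_consistent (n : nat) (S : sequent) : Prop :=
  ~ exists ws : list nat, length ws = Datatypes.S n /\ NoDup ws /\ Forall (is_root S) ws.

Definition stable (n : nat) (S : sequent) : Prop :=
  (forall w, label S w ->
     saturated S w /\ box_realized S w /\ stit_realized S w /\
     dia_propagated S w /\ cstit_propagated S w) /\
  (0 < n -> choice_consistent n S).

Definition clash (S : sequent) : Prop :=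
  exists w p, present S w (Var p) /\ present S w (NVar p).

Definition or_case (S : sequent) (w : nat) (a b : form) : Prop :=
  present S w (Or a b) /\ ~ (present S w a /\ present S w b).
Definition and_case (S : sequent) (w : nat) (a b : form) : Prop :=
  present S w (And a b) /\ ~ present S w a /\ ~ present S w b.

Definition step3_app (S : sequent) : Prop :=
  exists w, (exists a b, or_case S w a b) \/ (exists a b, and_case S w a b).
Definition step3_call (S S' : sequent) : Prop :=
  exists w,
    (exists a b, or_case S w a b /\ S' = (fst S, (w, a) :: (w, b) :: snd S)) \/
    ((~ exists a b, or_case S w a b) /\
     exists a b, and_case S w a b /\
       (S' = (fst S, (w, a) :: snd S) \/ S' = (fst S, (w, b) :: snd S))).

Definition step4_app (S : sequent) : Prop :=
  exists w f u, present S w (CStit f) /\ inCT S w u /\ ~ present S u f.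
Definition step4_call (S S' : sequent) : Prop :=
  exists w f u, present S w (CStit f) /\ inCT S w u /\ ~ present S u f /\
    S' = (fst S, (u, f) :: snd S).

Definition step5_app (S : sequent) : Prop :=
  exists w f u, present S w (Dia f) /\ label S u /\ ~ present S u f.
Definition step5_call (S S' : sequent) : Prop :=
  exists w f u, present S w (Dia f) /\ label S u /\ ~ present S u f /\
    S' = (fst S, (u, f) :: snd S).

Definition step6_app (S : sequent) : Prop :=
  exists w f, present S w (Stit f) /\ forall u, inCT S w u -> ~ present S u f.
Definition step6_call (S S' : sequent) : Prop :=
  exists w f v, present S w (Stit f) /\ (forall u, inCT S w u -> ~ present S u f) /\
    ~ label S v /\ S' = ((w, v) :: fst S, (v, f) :: snd S).

Definition step7_app (S : sequent) : Prop :=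
  exists w f, present S w (Box f) /\ forall u, label S u -> ~ present S u f.
Definition step7_call (S S' : sequent) : Prop :=
  exists w f v, present S w (Box f) /\ (forall u, label S u -> ~ present S u f) /\
    ~ label S v /\ S' = (fst S, (v, f) :: snd S).

Definition step8_call (n : nat) (S S' : sequent) : Prop :=
  0 < n /\ ~ choice_consistent n S /\
  exists ws : list nat, length ws = Datatypes.S n /\ NoDup ws /\ Forall (is_root S) ws /\
    exists k j, k < j /\ j <= n /\
      S' = ((nth k ws 0, nth j ws 0) :: fst S, snd S).

(* calls n S S' : the computation of Prove_n(S) may make the recursive call
   Prove_n(S'), the steps being tried in order. *)
Definition calls (n : nat) (S S' : sequent) : Prop :=
  ~ clash S /\ ~ stable n S /\
  (step3_call S S' \/
   (~ step3_app S /\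
    (step4_call S S' \/
     (~ step4_app S /\
      (step5_call S S' \/
       (~ step5_app S /\
        (step6_call S S' \/
         (~ step6_app S /\
          (step7_call S S' \/
           (~ step7_app S /\ step8_call n S S')))))))))).

Definition terminates (n : nat) (S : sequent) : Prop :=
  Acc (fun S' S0 => calls n S0 S') S.

(* Every recursive call decreases, lexicographically, the measure
     (subformulas of phi occurring nowhere,
      pairs (root r, subformula f) with f occurring nowhere in the tree of r,
      roots,
      pairs (label x, subformula f) with x:f absent).
   Steps 3-5 add a formula at an existing label (last component), step 6 realises a
   [1]-formula in the tree of an existing root (second), step 7 puts a formula at a
   fresh label that occurred nowhere (first), and step 8 makes a root a child of
   another root (third).  Since every formula stays a subformula of phi, each added
   formula is among the counted candidates; the invariant that every label lies below
   some root is what makes step 6 decrease the second component. *)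

From Stdlib Require Import List Arith Relations Wellfounded.
From Stdlib Require Import ClassicalEpsilon Lia.
Import ListNotations.

Definition holds (P : Prop) : bool :=
  if excluded_middle_informative P then true else false.

Lemma holds_spec (P : Prop) : holds P = true <-> P.
Proof.
  unfold holds; destruct (excluded_middle_informative P); split; congruence || tauto.
Qed.

Section Counting.
Context {A : Type} (eq_dec : forall x y : A, {x = y} + {x <> y}).

Definition selected (L : list A) (P : A -> Prop) : list A :=
  filter (fun x => holds (P x)) (nodup eq_dec L).

Definition count_distinct (L : list A) (P : A -> Prop) : nat := length (selected L P).

Lemma selected_NoDup L P : NoDup (selected L P).
Proof. apply NoDup_filter, NoDup_nodup. Qed.

Lemma in_selected L P x : In x (selected L P) <-> In x L /\ P x.
Proof. unfold selected; rewrite filter_In, nodup_In, holds_spec; reflexivity. Qed.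

Lemma count_distinct_le L L' P P' :
  (forall x, P' x -> P x) -> (forall x, P x -> In x L) ->
  count_distinct L' P' <= count_distinct L P.
Proof.
  intros HPP' HPL; apply NoDup_incl_length; [apply selected_NoDup|].
  intros x Hx; apply in_selected in Hx as [_ Hx]; apply in_selected; auto.
Qed.

Lemma count_distinct_lt L L' P P' x0 :
  (forall x, P' x -> P x) -> (forall x, P x -> In x L) -> P x0 -> ~ P' x0 ->
  count_distinct L' P' < count_distinct L P.
Proof.
  intros HPP' HPL Hx0 Hx0'.
  apply (NoDup_incl_length (l := x0 :: selected L' P')).
  - constructor; [rewrite in_selected; tauto | apply selected_NoDup].
  - intros x [<- | Hx]; apply in_selected; [auto|].
    apply in_selected in Hx as [_ Hx]; auto.
Qed.

End Counting.

Definition form_eq_dec (f g : form) : {f = g} + {f <> g}.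
Proof. decide equality; apply Nat.eq_dec. Defined.

Definition labelled_eq_dec (p q : nat * form) : {p = q} + {p <> q}.
Proof. decide equality; [apply form_eq_dec | apply Nat.eq_dec]. Defined.

Fixpoint subformulas (f : form) : list form :=
  f :: match f with
       | Var _ | NVar _ => []
       | And a b | Or a b => subformulas a ++ subformulas b
       | Box a | Dia a | Stit a | CStit a => subformulas a
       end.

Lemma subformulas_refl f : In f (subformulas f).
Proof. destruct f; left; reflexivity. Qed.

Lemma subformulas_trans f g h :
  In g (subformulas f) -> In h (subformulas g) -> In h (subformulas f).
Proof.
  induction f; simpl; intros [<- | Hg] Hh; auto; try contradiction;
    try (apply in_app_or in Hg as [Hg | Hg]); right; auto using in_or_app.
Qed.

Ltac subformula_of H :=
  apply (subformulas_trans _ _ _ H); simpl; auto using in_or_app, subformulas_refl.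

Definition extends (S S' : sequent) : Prop := incl (fst S) (fst S') /\ incl (snd S) (snd S').

Lemma reach_extends S S' x y : extends S S' -> reach S x y -> reach S' x y.
Proof.
  intros [HE _] H; induction H.
  - apply rt_step, HE; assumption.
  - apply rt_refl.
  - eapply rt_trans; eassumption.
Qed.

Lemma label_extends S S' x : extends S S' -> label S x -> label S' x.
Proof.
  intros [HE HP] [[y [E | E]] | [f P]].
  - left; exists y; left; apply HE, E.
  - left; exists y; right; apply HE, E.
  - right; exists f; apply HP, P.
Qed.

Lemma is_root_extends S S' r : extends S S' -> is_root S' r -> label S r -> is_root S r.
Proof. intros [HE _] [_ Hr] Hl; split; [assumption | intros x E; apply (Hr x), HE, E]. Qed.

Lemma is_root_no_new_edge S S' r :
  extends S S' -> (forall x, edge S' x r -> edge S x r) -> is_root S r -> is_root S' r.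
Proof.
  intros ext Hin [Hr Hno]; split; [exact (label_extends _ _ _ ext Hr)|].
  intros x E; exact (Hno x (Hin x E)).
Qed.

Lemma label_present S x f : present S x f -> label S x.
Proof. intros P; right; exists f; exact P. Qed.

Lemma label_reach S r u : reach S r u -> label S r -> label S u.
Proof. induction 1; auto. intros _; left; exists x; right; assumption. Qed.

Definition labels (S : sequent) : list nat :=
  map fst (snd S) ++ map fst (fst S) ++ map snd (fst S).

Lemma in_labels S x : label S x -> In x (labels S).
Proof.
  unfold labels; intros [[y [E | E]] | [f P]]; rewrite !in_app_iff.
  - right; left; exact (in_map fst _ _ E).
  - right; right; exact (in_map snd _ _ E).
  - left; exact (in_map fst _ _ P).
Qed.

(* The lexicographic order, stated with [<=] on the leading components so that each
   step only has to bound them from above. *)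
Definition lex_lt (p q : nat * nat * nat * nat) : Prop :=
  let '(a', b', c', d') := p in
  let '(a, b, c, d) := q in
  a' < a \/ a' <= a /\ (b' < b \/ b' <= b /\ (c' < c \/ c' <= c /\ d' < d)).

Lemma lex_lt_wf : well_founded lex_lt.
Proof.
  intros [[[a b] c] d]; revert b c d.
  induction a as [a IHa] using (well_founded_induction lt_wf); intros b.
  induction b as [b IHb] using (well_founded_induction lt_wf); intros c.
  induction c as [c IHc] using (well_founded_induction lt_wf); intros d.
  induction d as [d IHd] using (well_founded_induction lt_wf).
  constructor; intros [[[a' b'] c'] d'] H; simpl in H.
  destruct (Nat.lt_ge_cases a' a); [apply IHa; assumption|].
  replace a' with a by lia.
  destruct (Nat.lt_ge_cases b' b); [apply IHb; assumption|].
  replace b' with b by lia.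
  destruct (Nat.lt_ge_cases c' c); [apply IHc; assumption|].
  replace c' with c by lia.
  apply IHd; lia.
Qed.

Section Measure.
Variable phi : form.

Definition unused_count (S : sequent) : nat :=
  count_distinct form_eq_dec (subformulas phi)
    (fun f => In f (subformulas phi) /\ ~ exists u, present S u f).

Definition unrealized_count (S : sequent) : nat :=
  count_distinct labelled_eq_dec (list_prod (labels S) (subformulas phi))
    (fun '(r, f) => is_root S r /\ In f (subformulas phi) /\
                    ~ exists u, reach S r u /\ present S u f).

Definition root_count (S : sequent) : nat :=
  count_distinct Nat.eq_dec (labels S) (is_root S).

Definition missing_count (S : sequent) : nat :=
  count_distinct labelled_eq_dec (list_prod (labels S) (subformulas phi))
    (fun '(x, f) => label S x /\ In f (subformulas phi) /\ ~ present S x f).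

Definition measure (S : sequent) : nat * nat * nat * nat :=
  (unused_count S, unrealized_count S, root_count S, missing_count S).

Definition measure_lt (S' S : sequent) : Prop := lex_lt (measure S') (measure S).

Lemma measure_lt_wf : well_founded measure_lt.
Proof. exact (wf_inverse_image _ _ lex_lt measure lex_lt_wf). Qed.

Section Extension.
Variables S S' : sequent.
Hypothesis ext : extends S S'.

Lemma unused_count_le : unused_count S' <= unused_count S.
Proof.
  apply count_distinct_le; [|tauto].
  intros f [Hf Hu]; split; [assumption|].
  intros [u P]; apply Hu; exists u; apply (proj2 ext), P.
Qed.

Lemma unused_count_lt f v :
  In f (subformulas phi) -> (forall u, ~ present S u f) -> present S' v f ->
  unused_count S' < unused_count S.
Proof.
  intros Hf Hn Hv; apply (count_distinct_lt _ _ _ _ _ f).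
  - intros g [Hg Hu]; split; [assumption|].
    intros [u P]; apply Hu; exists u; apply (proj2 ext), P.
  - tauto.
  - split; [assumption|]; intros [u P]; exact (Hn u P).
  - intros [_ Hu]; apply Hu; exists v; exact Hv.
Qed.

Hypothesis roots_incl : forall r, is_root S' r -> is_root S r.

Lemma unrealized_count_le : unrealized_count S' <= unrealized_count S.
Proof.
  apply count_distinct_le.
  - intros [r f]; simpl; intros (Hr & Hf & Hu); refine (conj (roots_incl _ Hr) (conj Hf _)).
    intros (u & Hru & P); apply Hu; exists u; split.
    + exact (reach_extends _ _ _ _ ext Hru).
    + apply (proj2 ext), P.
  - intros [r f]; simpl; intros (Hr & Hf & _); apply in_prod; [apply in_labels, Hr | exact Hf].
Qed.

Lemma unrealized_count_lt r f v :
  is_root S' r -> In f (subformulas phi) ->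
  (forall u, reach S r u -> ~ present S u f) -> reach S' r v -> present S' v f ->
  unrealized_count S' < unrealized_count S.
Proof.
  intros Hr Hf Hn Hrv Hv; apply (count_distinct_lt _ _ _ _ _ (r, f)).
  - intros [r' g]; simpl; intros (Hr' & Hg & Hu); refine (conj (roots_incl _ Hr') (conj Hg _)).
    intros (u & Hru & P); apply Hu; exists u; split.
    + exact (reach_extends _ _ _ _ ext Hru).
    + apply (proj2 ext), P.
  - intros [r' g]; simpl; intros (Hr' & Hg & _); apply in_prod; [apply in_labels, Hr' | exact Hg].
  - refine (conj (roots_incl _ Hr) (conj Hf _)); intros (u & Hru & P); exact (Hn u Hru P).
  - intros (_ & _ & Hu); apply Hu; exists v; split; assumption.
Qed.

Lemma root_count_le : root_count S' <= root_count S.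
Proof. apply count_distinct_le; [assumption | intros r Hr; apply in_labels, Hr]. Qed.

Lemma root_count_lt r : is_root S r -> ~ is_root S' r -> root_count S' < root_count S.
Proof.
  intros Hr Hr'; apply (count_distinct_lt _ _ _ _ _ r); auto.
  intros x Hx; apply in_labels, Hx.
Qed.

End Extension.

Lemma missing_count_lt S S' x f :
  extends S S' -> (forall y, label S' y -> label S y) ->
  label S x -> In f (subformulas phi) -> ~ present S x f -> present S' x f ->
  missing_count S' < missing_count S.
Proof.
  intros ext Hl Hx Hf Hn Hp; apply (count_distinct_lt _ _ _ _ _ (x, f)).
  - intros [y g]; simpl; intros (Hy & Hg & Hu); refine (conj (Hl _ Hy) (conj Hg _)).
    intros P; apply Hu, (proj2 ext), P.
  - intros [y g]; simpl; intros (Hy & Hg & _); apply in_prod; [apply in_labels, Hy | exact Hg].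
  - simpl; auto.
  - intros (_ & _ & Hu); exact (Hu Hp).
Qed.

Definition well_formed (S : sequent) : Prop :=
  (forall x f, present S x f -> In f (subformulas phi)) /\
  (forall x, label S x -> exists r, is_root S r /\ reach S r x).

Lemma add_formulas_decreases S L :
  well_formed S ->
  (forall x f, In (x, f) L -> label S x /\ In f (subformulas phi)) ->
  (exists x f, In (x, f) L /\ ~ present S x f) ->
  well_formed (fst S, L ++ snd S) /\ measure_lt (fst S, L ++ snd S) S.
Proof.
  intros [Hsub Hroot] HL (x0 & f0 & Hx0 & Hn0).
  set (S' := (fst S, L ++ snd S)).
  assert (ext : extends S S') by (split; [apply incl_refl | apply incl_appr, incl_refl]).
  assert (Hpres : forall x f, present S' x f -> In (x, f) L \/ present S x f)
    by (intros x f; apply in_app_or).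
  assert (Hlab : forall x, label S' x -> label S x).
  { intros x [[y E] | [f P]]; [left; exists y; exact E|].
    destruct (Hpres _ _ P) as [P' | P']; [apply (HL _ _ P') | exact (label_present _ _ _ P')]. }
  assert (Hroots : forall r, is_root S' r <-> is_root S r).
  { intros r; split; intros [Hr Hin]; split; try exact Hin;
      [apply Hlab, Hr | exact (label_extends _ _ _ ext Hr)]. }
  split; [split|].
  - intros x f P; destruct (Hpres _ _ P) as [P' | P']; [apply (HL _ _ P') | apply (Hsub _ _ P')].
  - intros x Hx; destruct (Hroot x (Hlab x Hx)) as (r & Hr & Hrx).
    exists r; split; [apply Hroots, Hr | exact Hrx].
  - pose proof (unused_count_le S S' ext).
    pose proof (unrealized_count_le S S' ext (fun r => proj1 (Hroots r))).
    pose proof (root_count_le S S' (fun r => proj1 (Hroots r))).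
    assert (missing_count S' < missing_count S).
    { destruct (HL _ _ Hx0) as [Hl0 Hf0].
      apply (missing_count_lt S S' x0 f0 ext Hlab Hl0 Hf0 Hn0), in_or_app; left; exact Hx0. }
    unfold measure_lt, measure, lex_lt; lia.
Qed.

Lemma add_formula_decreases S x f :
  well_formed S -> label S x -> In f (subformulas phi) -> ~ present S x f ->
  well_formed (fst S, (x, f) :: snd S) /\ measure_lt (fst S, (x, f) :: snd S) S.
Proof.
  intros WF Hx Hf Hn; apply (add_formulas_decreases S [(x, f)] WF).
  - intros y g [E | []]; injection E as <- <-; split; assumption.
  - exists x, f; split; [left; reflexivity | exact Hn].
Qed.

Lemma step6_decreases S S' :
  well_formed S -> step6_call S S' -> well_formed S' /\ measure_lt S' S.
Proof.
  intros [Hsub Hroot] (w & f & v & Hw & Hn & Hv & ->).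
  set (S' := ((w, v) :: fst S, (v, f) :: snd S)).
  assert (ext : extends S S') by (split; apply incl_tl, incl_refl).
  assert (Hlab : forall x, label S' x -> x = v \/ label S x).
  { intros x [[y [[E | E] | [E | E]]] | [g [P | P]]].
    - injection E as <- _; right; exact (label_present _ _ _ Hw).
    - right; left; exists y; left; exact E.
    - injection E as _ <-; left; reflexivity.
    - right; left; exists y; right; exact E.
    - injection P as <- _; left; reflexivity.
    - right; right; exists g; exact P. }
  assert (Hroots : forall r, is_root S' r -> is_root S r).
  { intros r Hr; apply (is_root_extends _ _ _ ext Hr).
    destruct (Hlab r (proj1 Hr)) as [-> | Hl]; [|exact Hl].
    exfalso; apply (proj2 Hr w); left; reflexivity. }
  assert (Hroots' : forall r, is_root S r -> is_root S' r).
  { intros r Hr; apply (is_root_no_new_edge _ _ _ ext); [|exact Hr].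
    intros x [E | E]; [|exact E].
    injection E as <- <-; exfalso; exact (Hv (proj1 Hr)). }
  destruct (Hroot w (label_present _ _ _ Hw)) as (r0 & Hr0 & Hr0w).
  assert (Hr0v : reach S' r0 v).
  { apply rt_trans with w; [exact (reach_extends _ _ _ _ ext Hr0w)|].
    apply rt_step; left; reflexivity. }
  assert (Hf : In f (subformulas phi)) by subformula_of (Hsub _ _ Hw).
  split; [split|].
  - intros x g [P | P]; [injection P as <- <-; exact Hf | exact (Hsub _ _ P)].
  - intros x Hx; destruct (Hlab x Hx) as [-> | Hl].
    + exists r0; split; [apply Hroots', Hr0 | exact Hr0v].
    + destruct (Hroot x Hl) as (r & Hr & Hrx).
      exists r; split; [apply Hroots', Hr | exact (reach_extends _ _ _ _ ext Hrx)].
  - pose proof (unused_count_le S S' ext).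
    assert (unrealized_count S' < unrealized_count S).
    { apply (unrealized_count_lt S S' ext Hroots r0 f v (Hroots' _ Hr0) Hf);
        [| exact Hr0v | left; reflexivity].
      intros u Hu; apply Hn; exists r0; auto. }
    unfold measure_lt, measure, lex_lt; lia.
Qed.

Lemma step7_decreases S S' :
  well_formed S -> step7_call S S' -> well_formed S' /\ measure_lt S' S.
Proof.
  intros [Hsub Hroot] (w & f & v & Hw & Hn & Hv & ->).
  set (S' := (fst S, (v, f) :: snd S)).
  assert (ext : extends S S') by (split; [apply incl_refl | apply incl_tl, incl_refl]).
  assert (Hlab : forall x, label S' x -> x = v \/ label S x).
  { intros x [[y E] | [g [P | P]]].
    - right; left; exists y; exact E.
    - injection P as <- _; left; reflexivity.
    - right; right; exists g; exact P. }
  assert (Hf : In f (subformulas phi)) by subformula_of (Hsub _ _ Hw).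
  split; [split|].
  - intros x g [P | P]; [injection P as <- <-; exact Hf | exact (Hsub _ _ P)].
  - intros x Hx; destruct (Hlab x Hx) as [-> | Hl].
    + exists v; split; [|apply rt_refl].
      split; [right; exists f; left; reflexivity|].
      intros y E; apply Hv; left; exists y; right; exact E.
    + destruct (Hroot x Hl) as (r & Hr & Hrx).
      exists r; split; [exact (is_root_no_new_edge _ _ _ ext (fun _ E => E) Hr) | exact Hrx].
  - assert (unused_count S' < unused_count S).
    { apply (unused_count_lt S S' ext f v Hf); [|left; reflexivity].
      intros u P; exact (Hn u (label_present _ _ _ P) P). }
    unfold measure_lt, measure, lex_lt; lia.
Qed.

Lemma step8_decreases n S S' :
  well_formed S -> step8_call n S S' -> well_formed S' /\ measure_lt S' S.
Proof.
  intros [Hsub Hroot] (_ & _ & ws & Hlen & Hnd & Hws & k & j & Hkj & Hjn & ->).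
  set (a := nth k ws 0); set (b := nth j ws 0).
  assert (Ha : is_root S a) by (apply (proj1 (Forall_forall _ _) Hws), nth_In; lia).
  assert (Hb : is_root S b) by (apply (proj1 (Forall_forall _ _) Hws), nth_In; lia).
  assert (Hab : a <> b).
  { intros E; apply (proj1 (NoDup_nth ws 0) Hnd k j) in E; lia. }
  set (S' := ((a, b) :: fst S, snd S)).
  assert (ext : extends S S') by (split; [apply incl_tl, incl_refl | apply incl_refl]).
  assert (Hlab : forall x, label S' x -> label S x).
  { intros x [[y [[E | E] | [E | E]]] | [g P]].
    - injection E as <- _; exact (proj1 Ha).
    - left; exists y; left; exact E.
    - injection E as _ <-; exact (proj1 Hb).
    - left; exists y; right; exact E.
    - right; exists g; exact P. }
  assert (Hroots : forall r, is_root S' r -> is_root S r)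
    by (intros r Hr; exact (is_root_extends _ _ _ ext Hr (Hlab _ (proj1 Hr)))).
  assert (Hroots' : forall r, is_root S r -> r <> b -> is_root S' r).
  { intros r Hr Hrb; apply (is_root_no_new_edge _ _ _ ext); [|exact Hr].
    intros x [E | E]; [injection E as _ <-; contradiction | exact E]. }
  split; [split|].
  - exact Hsub.
  - intros x Hx; destruct (Hroot x (Hlab x Hx)) as (r & Hr & Hrx).
    destruct (Nat.eq_dec r b) as [-> | Hrb].
    + exists a; split; [apply Hroots'; assumption|].
      apply rt_trans with b; [apply rt_step; left; reflexivity|].
      exact (reach_extends _ _ _ _ ext Hrx).
    + exists r; split; [apply Hroots'; assumption | exact (reach_extends _ _ _ _ ext Hrx)].
  - pose proof (unused_count_le S S' ext).
    pose proof (unrealized_count_le S S' ext Hroots).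
    assert (root_count S' < root_count S).
    { apply (root_count_lt S S' Hroots b Hb); intros [_ Hno]; exact (Hno a (or_introl eq_refl)). }
    unfold measure_lt, measure, lex_lt; lia.
Qed.

Lemma step3_decreases S S' :
  well_formed S -> step3_call S S' -> well_formed S' /\ measure_lt S' S.
Proof.
  intros WF (w & [(a & b & [Hor Hn] & ->) | (_ & a & b & (Hand & Ha & Hb) & [-> | ->])]).
  - apply (add_formulas_decreases S [(w, a); (w, b)] WF).
    + pose proof (label_present _ _ _ Hor) as Hw.
      intros x f [E | [E | []]]; injection E as <- <-; split;
        solve [exact Hw | subformula_of (proj1 WF _ _ Hor)].
    + destruct (excluded_middle_informative (present S w a)) as [Pa | Pa].
      * exists w, b; split; [right; left; reflexivity | intros Pb; exact (Hn (conj Pa Pb))].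
      * exists w, a; split; [left; reflexivity | exact Pa].
  - apply add_formula_decreases;
      [exact WF | exact (label_present _ _ _ Hand) | subformula_of (proj1 WF _ _ Hand) | exact Ha].
  - apply add_formula_decreases;
      [exact WF | exact (label_present _ _ _ Hand) | subformula_of (proj1 WF _ _ Hand) | exact Hb].
Qed.

Lemma calls_decreases n S S' :
  well_formed S -> calls n S S' -> well_formed S' /\ measure_lt S' S.
Proof.
  intros WF (_ & _ & H).
  destruct H as [H3 | (_ & [H4 | (_ & [H5 | (_ & [H6 | (_ & [H7 | (_ & H8)])])])])].
  - exact (step3_decreases S S' WF H3).
  - destruct H4 as (w & f & u & Hw & (r & [Hr _] & _ & Hru) & Hn & ->).
    apply add_formula_decreases;
      [exact WF | exact (label_reach _ _ _ Hru Hr) | subformula_of (proj1 WF _ _ Hw) | exact Hn].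
  - destruct H5 as (w & f & u & Hw & Hu & Hn & ->).
    apply add_formula_decreases; [exact WF | exact Hu | subformula_of (proj1 WF _ _ Hw) | exact Hn].
  - exact (step6_decreases S S' WF H6).
  - exact (step7_decreases S S' WF H7).
  - exact (step8_decreases n S S' WF H8).
Qed.

Lemma well_formed_terminates n S : well_formed S -> terminates n S.
Proof.
  induction S as [S IH] using (well_founded_induction measure_lt_wf); intros WF.
  constructor; intros S' Hcall.
  destruct (calls_decreases n S S' WF Hcall) as [WF' Hlt].
  exact (IH S' Hlt WF').
Qed.

Lemma initial_well_formed w : well_formed (nil, (w, phi) :: nil).
Proof.
  split.
  - intros x f [E | []]; injection E as _ <-; apply subformulas_refl.
  - intros x [[y [[] | []]] | [f [E | []]]]; injection E as <- _.
    exists w; split; [|apply rt_refl].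
    split; [right; exists phi; left; reflexivity | intros y []].
Qed.

End Measure.

Theorem theorem6 (n : nat) (phi : form) (w : nat) :
  terminates n (nil, (w, phi) :: nil).
Proof. exact (well_formed_terminates phi n _ (initial_well_formed phi w)). Qed.
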